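(* Suppose $G_{\text{hon}}$ is connected. For each $l\in[n]$ let $\bar\tau(l)=\inf\{j\in\mathbb N:|\bar{\mathcal I}_j|=l\}$. Then for all $l,j\in\mathbb N$ with $l\le n$, $$\mathbb P(\bar\tau(l)>lj)\le l\,(1-\Upsilon/\bar d_{\text{hon}})^j.$$
   Context: $G=([n+m],E)$ undirected, honest agents $[n]$; for $i\in[n]$, $N_{\text{hon}}(i)$ its honest neighbors, $d_{\text{hon}}(i)=|N_{\text{hon}}(i)|$, $d(i)$ its total degree, $\bar d_{\text{hon}}=\max_{i\in[n]}d_{\text{hon}}(i)$; $G_{\text{hon}}$ the honest subgraph; $\Upsilon=\min_{i\in[n]}d_{\text{hon}}(i)/d(i)$; $i^\star\in[n]$ fixed. Noisy rumor process: independent $\bar Y_j^{(i)}\sim$Bernoulli$(\Upsilon)$, $\bar H_j^{(i)}\sim$Uniform$(N_{\text{hon}}(i))$; $\bar{\mathcal I}_0=\{i^\star\}$, $\bar{\mathcal I}_j=\bar{\mathcal I}_{j-1}\cup\{i\notin\bar{\mathcal I}_{j-1}:\bar Y_j^{(i)}=1,\bar H_j^{(i)}\in\bar{\mathcal I}_{j-1}\}$ for $j\ge1$. (Convention: $\bar\tau(1)=1$, i.e. the infimum is over $j\ge1$.) *)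

From HB Require Import structures.
From mathcomp Require Import all_boot all_order all_algebra.
Set Implicit Arguments. Unset Strict Implicit. Unset Printing Implicit Defensive.
Import Order.TTheory GRing.Theory Num.Theory.
Local Open Scope ring_scope.

Section Rumor.
Variables (n m : nat).
(* Graph G on vertices [n+m] given by an edge relation; honest agents are the
   first n vertices, embedded via lshift m. *)
Variable e : rel 'I_(n + m).

Definition hon (i : 'I_n) : 'I_(n + m) := lshift m i.

Definition Nhon (i : 'I_n) : {set 'I_n} := [set j : 'I_n | e (hon i) (hon j)].
Definition dhon (i : 'I_n) : nat := #|Nhon i|.
Definition deg (i : 'I_n) : nat := #|[set v : 'I_(n + m) | e (hon i) v]|.
Definition dhon_max : nat := \max_(i < n) dhon i.
Definition ehon : rel 'I_n := fun i j => e (hon i) (hon j).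
Definition hon_connected : Prop := forall i j : 'I_n, connect ehon i j.

Variable R : realFieldType.
(* Upsilon = min_i dhon(i)/d(i); each ratio is <= 1, so folding min from 1 is
   the minimum over the (nonempty, since i* exists) set of honest agents. *)
Definition Upsilon : R := \big[Num.min/1]_(i < n) ((dhon i)%:R / (deg i)%:R).

(* The randomness of round j>=1 for agent i is the pair (Y_j^(i), H_j^(i)).
   A sample over horizon T: round k+1 <-> index k : 'I_T. *)
Definition Omega (T : nat) := {ffun 'I_T -> {ffun 'I_n -> bool * 'I_n}}.

Definition pr1 (i : 'I_n) (x : bool * 'I_n) : R :=
  (if x.1 then Upsilon else 1 - Upsilon) *
  (if x.2 \in Nhon i then ((dhon i)%:R)^-1 else 0).

Definition weight (T : nat) (w : Omega T) : R :=
  \prod_(k : 'I_T) \prod_(i : 'I_n) pr1 i (w k i).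

Definition Prob (T : nat) (P : pred (Omega T)) : R := \sum_(w : Omega T | P w) weight w.

Definition roundvar (T : nat) (w : Omega T) (j : nat) (i : 'I_n) : bool * 'I_n :=
  match j with
  | 0 => (false, i)
  | j'.+1 => if insub j' is Some k then w k i else (false, i)
  end.

Fixpoint infected (istar : 'I_n) (T : nat) (w : Omega T) (j : nat) : {set 'I_n} :=
  match j with
  | 0 => [set istar]
  | j'.+1 =>
      let S := infected istar w j' in
      S :|: [set i | (i \notin S) && (roundvar w j i).1 && ((roundvar w j i).2 \in S)]
  end.

(* event { \bar tau(l) > t } where \bar tau(l) = inf{ j >= 1 : |\bar I_j| >= l }
   (inf of the empty set = +oo): no round j in 1..t has |I_j| >= l. *)
Definition tau_gt (istar : 'I_n) (T : nat) (l t : nat) : pred (Omega T) :=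
  fun w => [forall k : 'I_t.+1, (0 < val k)%N ==> (#|infected istar w k| < l)%N].

End Rumor.

From mathcomp Require Import all_boot all_order all_algebra.
Set Implicit Arguments. Unset Strict Implicit. Unset Printing Implicit Defensive.
Import Order.TTheory GRing.Theory Num.Theory.
Local Open Scope ring_scope.

(* Let S be the current infected set with |S| < n. By connectedness some honest
   v outside S has an honest neighbour u in S, and v catches the rumour in the
   next round with probability at least Upsilon / dhon v >= Upsilon / dhon_max
   (draw Y = 1 and H = u). So S stays unchanged for j consecutive rounds with
   probability at most q^j, q = 1 - Upsilon / dhon_max. Cut the l*j rounds into
   l blocks of j rounds: if fewer than l agents are infected at the end, then
   some block started from a set of size < n and did not grow, and a union
   bound over the l blocks gives l * q^j. *)

Lemma connect_exit (T : finType) (r : rel T) (S : {set T}) x y :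
  connect r x y -> x \in S -> y \notin S ->
  exists u v, [/\ u \in S, v \notin S & r u v].
Proof.
move=> /connectP [p pth ->] {y}.
elim: p x pth => [|z p IHp] x /= pth xS; first by rewrite xS.
case/andP: pth => rxz pth; case zS: (z \in S); first exact: IHp.
by move=> _; exists x, z; rewrite zS.
Qed.

Section RumorSpreading.
Variables (R : realFieldType) (n m : nat) (e : rel 'I_(n + m)).

Local Notation Ups := (Upsilon e R).
Local Notation pr1 := (pr1 e R).
Local Notation round := {ffun 'I_n -> bool * 'I_n}.

Lemma Upsilon_ge0 : 0 <= Ups.
Proof.
rewrite /Upsilon; elim/big_ind: _ => // [x y x0 y0|i _].
  by rewrite le_min x0 y0.
by rewrite divr_ge0 ?ler0n.
Qed.

Lemma Upsilon_le1 : Ups <= 1.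
Proof. by rewrite /Upsilon; elim/big_rec: _ => // i x _ x1; rewrite ge_min x1 orbT. Qed.

Lemma pr1_ge0 i x : 0 <= pr1 i x.
Proof.
apply: mulr_ge0; first by case: x.1; rewrite ?Upsilon_ge0 ?subr_ge0 ?Upsilon_le1.
by case: ifP; rewrite ?invr_ge0 ?ler0n.
Qed.

(* Equality fails when [Nhon i] is empty: then [pr1 i] is identically 0. *)
Lemma sum_pr1_le1 i : \sum_x pr1 i x <= 1.
Proof.
rewrite -(pair_big xpredT xpredT (fun b y => pr1 i (b, y))) /= big_bool /=.
rewrite /pr1 /= -!big_distrr /= -mulrDl addrC subrK mul1r -big_mkcond /=.
rewrite sumr_const /dhon; have [->|d_gt0] := posnP #|Nhon e i|.
  by rewrite mulr0n ler01.
by rewrite -[X in X <= _]mulr_natr mulVf ?pnatr_eq0 -?lt0n.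
Qed.

Lemma sum_pr1_ge0 i : 0 <= \sum_x pr1 i x.
Proof. by apply: sumr_ge0 => x _; apply: pr1_ge0. Qed.

Definition round_weight (c : round) : R := \prod_i pr1 i (c i).

Lemma round_weight_ge0 c : 0 <= round_weight c.
Proof. by apply: prodr_ge0 => i _; apply: pr1_ge0. Qed.

Lemma sum_round_weight_le1 : \sum_c round_weight c <= 1.
Proof.
rewrite -(bigA_distr_bigA pr1); apply: prodr_ile1 => i _.
by rewrite sum_pr1_ge0 sum_pr1_le1.
Qed.

(* Only the coordinate [v] of the round matters; the others sum to at most 1. *)
Lemma sum_round_weight_coord (G : bool * 'I_n -> R) v :
  (forall x, 0 <= G x) ->
  \sum_c round_weight c * G (c v) <= \sum_x pr1 v x * G x.
Proof.
move=> G_ge0; pose F i x := pr1 i x * (if i == v then G x else 1).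
have -> : \sum_c round_weight c * G (c v) = \prod_i \sum_x F i x.
  rewrite bigA_distr_bigA; apply: eq_bigr => c _.
  rewrite /round_weight (bigD1 v) //= [RHS](bigD1 v) //= /F eqxx mulrAC.
  by congr (_ * _); apply: eq_bigr => i /negbTE ->; rewrite mulr1.
rewrite (bigD1 v) //= {1}/F eqxx ler_piMr //.
  by apply: sumr_ge0 => x _; rewrite mulr_ge0 ?pr1_ge0.
apply: prodr_ile1 => i /negbTE iv; rewrite /F iv.
by under eq_bigr do rewrite mulr1; rewrite sum_pr1_ge0 sum_pr1_le1.
Qed.

Lemma weight_ge0 T (w : Omega n T) : 0 <= weight e R w.
Proof. by apply: prodr_ge0 => k _; apply: round_weight_ge0. Qed.

Lemma sum_weight_le1 T : \sum_(w : Omega n T) weight e R w <= 1.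
Proof.
rewrite -(bigA_distr_bigA (fun _ => round_weight)) /=.
by apply: prodr_ile1 => k _; rewrite sumr_ge0 ?sum_round_weight_le1 // => c _;
  apply: round_weight_ge0.
Qed.

Lemma Prob_le1 T (P : pred (Omega n T)) : Prob e R P <= 1.
Proof.
apply: le_trans (sum_weight_le1 T); rewrite [X in _ <= X](bigID P) /= lerDl.
by apply: sumr_ge0 => w _; apply: weight_ge0.
Qed.

Definition expect T (F : Omega n T -> R) : R := \sum_w weight e R w * F w.

Lemma eq_expect T (F G : Omega n T -> R) : F =1 G -> expect F = expect G.
Proof. by move=> FG; apply: eq_bigr => w _; rewrite FG. Qed.

Lemma ler_expect T (F G : Omega n T -> R) :
  (forall w, F w <= G w) -> expect F <= expect G.
Proof. by move=> FG; apply: ler_sum => w _; rewrite ler_wpM2l ?weight_ge0. Qed.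

Lemma expect_le_const T (F : Omega n T -> R) c :
  0 <= c -> (forall w, F w <= c) -> expect F <= c.
Proof.
move=> c_ge0 Fc; apply: le_trans (ler_expect Fc) _.
by rewrite /expect -mulr_suml ler_piMl ?sum_weight_le1.
Qed.

Lemma expectDr_le T (F : Omega n T -> R) c :
  0 <= c -> expect (fun w => F w + c) <= expect F + c.
Proof.
move=> c_ge0; rewrite /expect; under eq_bigr do rewrite mulrDr.
rewrite big_split /= lerD2l.
by rewrite -mulr_suml ler_piMl ?sum_weight_le1.
Qed.

Lemma Prob_expect T (P : pred (Omega n T)) : Prob e R P = expect (fun w => (P w)%:R).
Proof.
rewrite /Prob /expect big_mkcond; apply: eq_bigr => w _.
by case: (P w); rewrite ?mulr1 ?mulr0.
Qed.

Definition catw a b (w1 : Omega n a) (w2 : Omega n b) : Omega n (a + b) :=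
  [ffun k => match split k with inl x => w1 x | inr y => w2 y end].

Lemma catw_lshift a b (w1 : Omega n a) (w2 : Omega n b) x : catw w1 w2 (lshift b x) = w1 x.
Proof. by rewrite ffunE (unsplitK (inl _ x)). Qed.

Lemma catw_rshift a b (w1 : Omega n a) (w2 : Omega n b) y : catw w1 w2 (rshift a y) = w2 y.
Proof. by rewrite ffunE (unsplitK (inr _ y)). Qed.

Lemma weight_catw a b (w1 : Omega n a) (w2 : Omega n b) :
  weight e R (catw w1 w2) = weight e R w1 * weight e R w2.
Proof.
rewrite /weight big_split_ord /=.
by congr (_ * _); apply: eq_bigr => k _; rewrite ?catw_lshift ?catw_rshift.
Qed.

(* Fubini for the product law: the first [a] rounds are independent of the last [b]. *)
Lemma expect_catw a b (F : Omega n (a + b) -> R) :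
  expect F = expect (fun w1 => expect (fun w2 => F (catw w1 w2))).
Proof.
rewrite /expect (reindex (fun p : Omega n a * Omega n b => catw p.1 p.2)) /=.
  under [RHS]eq_bigr do rewrite big_distrr /=.
  by rewrite pair_big; apply: eq_bigr => -[w1 w2] _; rewrite weight_catw mulrA.
exists (fun w => ([ffun x => w (lshift b x)], [ffun y => w (rshift a y)])).
  by move=> [w1 w2] _; congr pair; apply/ffunP => x;
    rewrite ffunE ?catw_lshift ?catw_rshift.
move=> w _; apply/ffunP => k; rewrite ffunE -{2}(splitK k).
by case: (split k) => x; rewrite ffunE.
Qed.

Lemma expect_round (G : Omega n 1 -> R) :
  expect G = \sum_c round_weight c * G [ffun _ => c].
Proof.
rewrite /expect (reindex (fun c : round => [ffun _ : 'I_1 => c])) /=.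
  by apply: eq_bigr => c _; rewrite /weight big_ord1 ffunE.
exists (fun w => w ord0) => [c _|w _]; first by rewrite ffunE.
by apply/ffunP => k; rewrite ffunE [k]ord1.
Qed.

Definition step (S : {set 'I_n}) (c : 'I_n -> bool * 'I_n) : {set 'I_n} :=
  S :|: [set i | (i \notin S) && (c i).1 && ((c i).2 \in S)].

Lemma eq_step S c c' : c =1 c' -> step S c = step S c'.
Proof. by move=> cc'; apply/setP => i; rewrite !inE cc'. Qed.

Lemma step_eq_uninfected S c v :
  step S c = S -> v \notin S -> ~~ ((c v).1 && ((c v).2 \in S)).
Proof.
move=> stepS vS; apply: contraNN vS => /andP[c1 c2].
by rewrite -stepS !inE c1 c2 !andbT orbN.
Qed.

Fixpoint run T (w : Omega n T) (S : {set 'I_n}) (k : nat) : {set 'I_n} :=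
  if k is k'.+1 then step (run w S k') (roundvar w k) else S.

Lemma runS T (w : Omega n T) S k : run w S k.+1 = step (run w S k) (roundvar w k.+1).
Proof. by []. Qed.

Lemma infected_run istar T (w : Omega n T) k : infected istar w k = run w [set istar] k.
Proof. by elim: k => // k IHk; rewrite runS -IHk. Qed.

Lemma run_subset T (w : Omega n T) (S : {set 'I_n}) k : S \subset run w S k.
Proof. by elim: k => // k IHk; rewrite runS (subset_trans IHk) ?subsetUl. Qed.

Lemma roundvar_catwl a b (w1 : Omega n a) (w2 : Omega n b) k :
  (k < a)%N -> roundvar (catw w1 w2) k.+1 =1 roundvar w1 k.+1.
Proof.
move=> ka i; have kab : (k < a + b)%N by rewrite ltn_addr.
rewrite /roundvar (insubT (fun k => k < a + b)%N kab) (insubT (fun k => k < a)%N ka) /=.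
by rewrite -(catw_lshift w1 w2); congr (catw _ _ _ _); apply: val_inj.
Qed.

Lemma roundvar_catwr a b (w1 : Omega n a) (w2 : Omega n b) k :
  roundvar (catw w1 w2) (a + k).+1 =1 roundvar w2 k.+1.
Proof.
move=> i; rewrite /roundvar; have [kb|bk] := ltnP k b.
  have akb : (a + k < a + b)%N by rewrite ltn_add2l.
  rewrite (insubT (fun k => k < a + b)%N akb) (insubT (fun k => k < b)%N kb) /=.
  by rewrite -(catw_rshift w1 w2); congr (catw _ _ _ _); apply: val_inj.
rewrite (@insubF _ (fun k => k < a + b)%N) ?(@insubF _ (fun k => k < b)%N) //.
  by rewrite ltnNge bk.
by rewrite ltn_add2l ltnNge bk.
Qed.

Lemma run_catw a b (w1 : Omega n a) (w2 : Omega n b) (S : {set 'I_n}) k :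
  run (catw w1 w2) S (a + k) = run w2 (run w1 S a) k.
Proof.
have run_l k' : (k' <= a)%N -> run (catw w1 w2) S k' = run w1 S k'.
  elim: k' => // k' IHk ka; rewrite !runS IHk; last exact: ltnW.
  exact/eq_step/roundvar_catwl.
elim: k => [|k IHk]; first by rewrite addn0 run_l.
by rewrite addnS !runS IHk; apply/eq_step/roundvar_catwr.
Qed.

Lemma run_round_catw (c : round) T (w : Omega n T) (S : {set 'I_n}) k :
  run (catw ([ffun _ => c] : Omega n 1) w) S (1 + k) = run w (step S c) k.
Proof.
rewrite run_catw runS; congr run; apply: eq_step => i.
by rewrite /roundvar (insubT (fun k => k < 1)%N (ltn0Sn 0)) /= ffunE.
Qed.

Definition q : R := 1 - Ups / (dhon_max e)%:R.

Lemma q_ge0 : 0 <= q.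
Proof.
rewrite /q subr_ge0; have [->|d_gt0] := posnP (dhon_max e).
  by rewrite invr0 mulr0 ler01.
by rewrite ler_pdivrMr ?ltr0n // mul1r (le_trans Upsilon_le1) ?ler1n.
Qed.

Lemma infection_prob_ge (S : {set 'I_n}) u v : u \in S -> u \in Nhon e v ->
  Ups / (dhon_max e)%:R <= \sum_x pr1 v x * (x.1 && (x.2 \in S))%:R.
Proof.
move=> uS uv; have dv_gt0 : (0 < dhon e v)%N by apply/card_gt0P; exists u.
have dv_le : (dhon e v <= dhon_max e)%N := @leq_bigmax _ (dhon e) v.
apply: le_trans (_ : Ups / (dhon e v)%:R <= _).
  rewrite ler_wpM2l ?Upsilon_ge0 // lef_pV2 ?posrE ?ltr0n ?ler_nat //.
  exact: leq_trans dv_le.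
rewrite (bigD1 (true, u)) //= uS mulr1 /pr1 /= uv lerDl.
by apply: sumr_ge0 => x _; rewrite mulr_ge0 ?pr1_ge0.
Qed.

Hypotheses (e_sym : symmetric e) (connected : hon_connected e).

Lemma step_stall_le (S : {set 'I_n}) : S != set0 -> (#|S| < n)%N ->
  \sum_c round_weight c * (step S c == S)%:R <= q.
Proof.
case/set0Pn=> s sS S_lt_n.
have [y yS] : exists y, y \notin S.
  apply/existsP; rewrite -negb_forall; apply: contraTN S_lt_n => /forallP allS.
  have -> : S = setT by apply/setP => i; rewrite inE allS.
  by rewrite -leqNgt cardsT card_ord.
have [u [v [uS vS uv]]] := connect_exit (connected s y) sS yS.
have uNv : u \in Nhon e v by rewrite inE e_sym.
pose G x : R := (~~ (x.1 && (x.2 \in S)))%:R.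
apply: le_trans (_ : \sum_c round_weight c * G (c v) <= _).
  apply: ler_sum => c _; rewrite ler_wpM2l ?round_weight_ge0 //.
  by case: eqP => [/step_eq_uninfected /(_ vS) infect|]; rewrite /G ?infect ?ler0n.
apply: le_trans (sum_round_weight_coord v (fun x => ler0n _ _ : 0 <= G x)) _.
have -> : \sum_x pr1 v x * G x =
    \sum_x pr1 v x - \sum_x pr1 v x * (x.1 && (x.2 \in S))%:R.
  by rewrite -sumrB; apply: eq_bigr => x _; rewrite /G; case: (_ && _);
    rewrite ?mulr1 ?mulr0 ?subr0 ?subrr.
by rewrite lerB ?sum_pr1_le1 ?(infection_prob_ge uS uNv).
Qed.

Lemma run_stall_le k (S : {set 'I_n}) : S != set0 -> (#|S| < n)%N ->
  expect (fun w : Omega n k => (run w S k == S)%:R) <= q ^+ k.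
Proof.
elim: k S => [|k IHk] S S0 S_lt_n.
  by apply: expect_le_const => [|w]; rewrite ?ler01 //= eqxx.
rewrite -[k.+1]/(1 + k)%N expect_catw expect_round exprS.
apply: le_trans (_ : \sum_c round_weight c * ((step S c == S)%:R * q ^+ k) <= _).
  apply: ler_sum => c _; rewrite ler_wpM2l ?round_weight_ge0 //.
  under eq_expect do rewrite run_round_catw.
  case: eqP => [->|S'S]; first by rewrite mul1r IHk.
  rewrite mul0r; apply: expect_le_const => // w; rewrite lern0 eqb0.
  apply/eqP => run_eq; apply: S'S; apply/eqP; rewrite eqEsubset subsetUl andbT.
  by rewrite -{2}run_eq run_subset.
under eq_bigr do rewrite mulrA.
by rewrite -mulr_suml ler_wpM2r ?exprn_ge0 ?q_ge0 ?step_stall_le.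
Qed.

Lemma run_small_le l k r (S : {set 'I_n}) : (l <= n)%N -> S != set0 ->
  (l <= #|S| + r)%N ->
  expect (fun w : Omega n (r * k) => (#|run w S (r * k)| < l)%:R) <= r%:R * q ^+ k.
Proof.
move=> l_le_n.
have bound_ge0 r' : 0 <= r'%:R * q ^+ k by rewrite mulr_ge0 ?exprn_ge0 ?q_ge0.
have large T (w : Omega n T) (S' : {set 'I_n}) t :
    (l <= #|S'|)%N -> (#|run w S' t| < l)%N = false.
  by move=> lS; rewrite ltnNge (leq_trans lS) ?subset_leq_card ?run_subset.
elim: r S => [|r IHr] S S0 l_le.
  rewrite addn0 in l_le.
  by apply: expect_le_const => [|w]; rewrite ?bound_ge0 ?large ?ler0n.
have [S_lt_l|l_le_S] := ltnP #|S| l; last first.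
  by apply: expect_le_const => [|w]; rewrite ?bound_ge0 ?large ?ler0n.
have block (w1 : Omega n k) :
    expect (fun w2 : Omega n (r * k) => (#|run (catw w1 w2) S (k + r * k)| < l)%:R)
    <= (run w1 S k == S)%:R + r%:R * q ^+ k.
  under eq_expect do rewrite run_catw.
  have [->|grew] := eqVneq (run w1 S k) S.
    apply: expect_le_const => [|w2]; first by rewrite addr_ge0 ?ler01.
    by rewrite (le_trans (_ : _ <= 1)) ?lerDl //; case: (_ < _)%N.
  rewrite add0r IHr //.
    by apply: contra_neq S0 => run0; apply/eqP; rewrite -subset0 -run0 run_subset.
  rewrite (leq_trans l_le) // addnS -addSn leq_add2r.
  by rewrite proper_card // properEneq eq_sym grew run_subset.
rewrite mulSn expect_catw -nat1r mulrDl mul1r.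
apply: le_trans (ler_expect block) (le_trans (expectDr_le _ (bound_ge0 r)) _).
by rewrite lerD2r run_stall_le // (leq_trans S_lt_l).
Qed.

End RumorSpreading.

Lemma tau_gt_run_small n (istar : 'I_n) l t T (w : Omega n T) :
  (0 < t)%N -> tau_gt istar l t w -> (#|run w [set istar] t| < l)%N.
Proof. by move=> t_gt0 /forallP /(_ ord_max) /=; rewrite t_gt0 infected_run. Qed.

Theorem mainTheorem15 (R : realFieldType) (n m : nat) (e : rel 'I_(n + m))
  (e_sym : symmetric e) (e_irr : irreflexive e) (istar : 'I_n) :
  hon_connected e ->
  forall l j : nat, (1 <= l)%N -> (l <= n)%N ->
    Prob e R (T := l * j) (tau_gt istar l (l * j))
    <= l%:R * (1 - Upsilon e R / (dhon_max e)%:R) ^+ j.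
Proof.
move=> connected l j l_gt0 l_le_n; case: j => [|j].
  by rewrite expr0 mulr1 (le_trans (Prob_le1 _ _ _)) ?ler1n.
rewrite Prob_expect.
apply: le_trans (run_small_le R e_sym connected j.+1 (S := [set istar]) l_le_n _ _).
- apply: ler_expect => w; case: (tau_gt _ _ _ w) / idP => [tau|]; last by rewrite ler0n.
  by rewrite tau_gt_run_small // muln_gt0 l_gt0.
- by apply/set0Pn; exists istar; rewrite set11.
- by rewrite cards1 add1n.
Qed.
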